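(* Let $\mathbb{F}_3$ be the free group on generators $a,b,c$, let $r = aba^{-1}b^{-1}c$, and let $N \subset \mathbb{F}_3$ be the normal closure of $r$. For $w \in N$ define its combinatorial area $A(w)$ as the minimal $d\ge 0$ such that $$w = \prod_{i=1}^d g_i r^{\pm 1} g_i^{-1}, \quad g_i \in \mathbb{F}_3,$$ and define its $(a,b)$-length $l(w)$ as the number of occurrences of the letters $a^{\pm 1}, b^{\pm 1}$ in the cyclic reduction of $w$ (occurrences of $c^{\pm1}$ are not counted). Then $A(w) \leq \frac{1}{2} l(w)$ for every $w \in N$. *)

From mathcomp Require Import all_boot.
Set Implicit Arguments. Unset Strict Implicit. Unset Printing Implicit Defensive.

(* A letter is a generator index (0 = a, 1 = b, 2 = c) and an exponent flag:
   (i, false) = x_i, (i, true) = x_i^{-1}. *)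
Definition letter := ('I_3 * bool)%type.
Definition word := seq letter.

Definition gen_a : 'I_3 := @Ordinal 3 0 isT.
Definition gen_b : 'I_3 := @Ordinal 3 1 isT.
Definition gen_c : 'I_3 := @Ordinal 3 2 isT.

Definition linv (x : letter) : letter := (x.1, ~~ x.2).

Definition winv (w : word) : word := rev (map linv w).

(* free reduction (stack algorithm); two words represent the same element of F_3
   iff they have the same free reduction *)
Definition push (x : letter) (s : word) : word :=
  match s with
  | y :: s' => if y == linv x then s' else x :: s
  | [::] => [:: x]
  end.
Definition reduce (w : word) : word := foldr push [::] w.

Definition feq (u v : word) : Prop := reduce u = reduce v.

Definition rel_r : word :=
  [:: (gen_a, false); (gen_b, false); (gen_a, true); (gen_b, true); (gen_c, false)].

Definition conj_r (ge : word * bool) : word :=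
  ge.1 ++ (if ge.2 then winv rel_r else rel_r) ++ winv ge.1.

Definition prod_conj (gs : seq (word * bool)) : word := flatten (map conj_r gs).

Definition in_N (w : word) : Prop := exists gs, feq w (prod_conj gs).

(* w can be written as a product of d conjugates of r^{±1}; the combinatorial
   area A(w) is the least such d, so  A(w) <= d  iff  some such product has
   length <= d. *)
Definition area_le (w : word) (d : nat) : Prop :=
  exists gs, feq w (prod_conj gs) /\ size gs <= d.

(* cyclic reduction of a (freely reduced) word: strip first and last letters
   while they are mutually inverse. The fuel n = size s suffices. *)
Fixpoint cred (n : nat) (s : word) : word :=
  match n with
  | 0 => s
  | n'.+1 =>
    match s with
    | x :: t => if (0 < size t) && (last x t == linv x)
                then cred n' (take (size t).-1 t) else s
    | [::] => s
    end
  end.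

Definition cyclic_reduction (w : word) : word :=
  cred (size (reduce w)) (reduce w).

Definition ab_length (w : word) : nat :=
  count (fun x : letter => x.1 != gen_c) (cyclic_reduction w).

From mathcomp Require Import all_boot all_order all_algebra.
From mathcomp Require Import zify.
Set Implicit Arguments. Unset Strict Implicit. Unset Printing Implicit Defensive.

(* Substituting c = b a b^-1 a^-1 maps F_3 onto F_2 = <a, b>, and each letter
   c^±1 of w can be traded for a conjugate of r^±1, so w is a product of #c(w)
   conjugates times its image. For w in N the image is a closed path in the
   Cayley tree of F_2, so on every edge the net crossings of the four-edge paths
   coming from the letters c^±1 cancel those of the letters a^±1, b^±1, which
   are at most l(w) in total. If no two letters c^±1 of opposite signs share a
   base vertex, an outermost one owns three of its four edges; inductively the
   c-paths have total variation at least 2 #c(w), whence 2 #c(w) <= l(w).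
   Otherwise two such letters enclose a subword u of N, and
   w = al c^e u c^-e be = (al c^e u c^-e al^-1) (al be) splits into two
   shorter words of N. Finally, w is conjugate to its cyclic reduction. *)

Lemma linvK : involutive linv.
Proof. by case=> i b; rewrite /linv /= negbK. Qed.

Fixpoint reduced (s : word) : bool :=
  match s with
  | x :: (y :: _) as t => (y != linv x) && reduced t
  | _ => true
  end.

Lemma push_reduced x s : reduced s -> reduced (push x s).
Proof.
case: s => [|y s] //= rs; case: ifP => [_|/negbT yx] /=.
  by case: s rs => // z s /andP[].
by rewrite yx.
Qed.

Lemma foldr_push_reduced q s : reduced q -> reduced (foldr push q s).
Proof. by move=> rq; elim: s => [|x s IH] //=; apply: push_reduced. Qed.

Lemma reduce_reduced w : reduced (reduce w). Proof. exact: foldr_push_reduced. Qed.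

Lemma push_linvK x s : reduced s -> push (linv x) (push x s) = s.
Proof.
case: s => [|y s] /=; first by rewrite linvK eqxx.
case: ifP => [/eqP ->|_]; last by rewrite /push linvK eqxx.
by case: s => [|z s] // /andP[zy _]; rewrite /= (negbTE zy).
Qed.

Lemma push_linvVK x s : reduced s -> push x (push (linv x) s) = s.
Proof. by move=> rs; rewrite -{1}(linvK x) push_linvK. Qed.

Lemma foldr_push_reduce q v : reduced q -> foldr push q (reduce v) = foldr push q v.
Proof.
move=> rq; elim: v => [|x v IH] //=; rewrite -IH.
case: (reduce v) (reduce_reduced v) => [|y s] //= rys.
case: ifP => [/eqP ->|_] //=; rewrite push_linvVK //.
by apply: foldr_push_reduced; case: s rys => // z s /andP[].
Qed.

Lemma reduce_cat u v : reduce (u ++ v) = foldr push (reduce v) u.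
Proof. by rewrite /reduce foldr_cat. Qed.

Lemma reduce_catl u v : reduce (reduce u ++ v) = reduce (u ++ v).
Proof. by rewrite !reduce_cat foldr_push_reduce // reduce_reduced. Qed.

Lemma reduce_catr u v : reduce (u ++ reduce v) = reduce (u ++ v).
Proof. by rewrite !reduce_cat [reduce (reduce v)]foldr_push_reduce. Qed.

Lemma reduce_id s : reduced s -> reduce s = s.
Proof.
elim: s => [|x s IH] //= rxs; rewrite IH; last by case: s rxs {IH} => // y s /andP[].
by case: s rxs {IH} => [|y s] //= /andP[/negbTE ->].
Qed.

Lemma reduceK w : reduce (reduce w) = reduce w.
Proof. exact/reduce_id/reduce_reduced. Qed.

Lemma winv_cat u v : winv (u ++ v) = winv v ++ winv u.
Proof. by rewrite /winv map_cat rev_cat. Qed.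

Lemma winv_cons x u : winv (x :: u) = winv u ++ [:: linv x].
Proof. by rewrite /winv /= rev_cons cats1. Qed.

Lemma winvK : involutive winv.
Proof. by move=> u; rewrite /winv map_rev revK -map_comp (eq_map linvK) map_id. Qed.

Lemma reduce_mulgV g : reduce (g ++ winv g) = [::].
Proof.
elim: g => [|x g IH] //.
have -> : (x :: g) ++ winv (x :: g) = [:: x] ++ (g ++ winv g) ++ [:: linv x].
  by rewrite winv_cons /= catA.
by rewrite -reduce_catr -(reduce_catl (g ++ winv g)) IH /= eqxx.
Qed.

Lemma reduce_mulVg g : reduce (winv g ++ g) = [::].
Proof. by rewrite -{2}(winvK g) reduce_mulgV. Qed.

Lemma reduce_mulKVg g t : reduce (g ++ winv g ++ t) = reduce t.
Proof. by rewrite catA -reduce_catl reduce_mulgV. Qed.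

Lemma reduce_mulKg g t : reduce (winv g ++ g ++ t) = reduce t.
Proof. by rewrite -{2}(winvK g) reduce_mulKVg. Qed.

Lemma feq_cat u u' v v' : feq u u' -> feq v v' -> feq (u ++ v) (u' ++ v').
Proof.
by rewrite /feq => eu ev; rewrite -reduce_catl -reduce_catr eu ev reduce_catr reduce_catl.
Qed.

Lemma feq_sym u v : feq u v -> feq v u. Proof. by []. Qed.

Lemma feq_trans u v t : feq u v -> feq v t -> feq u t.
Proof. exact: etrans. Qed.

Lemma feq_cat2l u v v' : feq v v' -> feq (u ++ v) (u ++ v').
Proof. exact: feq_cat. Qed.

Lemma feq_cancelr s g : feq (s ++ g) g -> feq s [::].
Proof.
rewrite /feq => e; rewrite -[s]cats0 -(reduce_mulgV g) reduce_catr catA.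
by rewrite -reduce_catl e reduce_catl reduce_mulgV.
Qed.

Lemma feq_conj_trivial g s : feq (g ++ s ++ winv g) [::] -> feq s [::].
Proof.
rewrite /feq => e.
have -> : reduce s = reduce (winv g ++ (g ++ s ++ winv g) ++ g).
  by rewrite -!catA reduce_mulKg -reduce_catr reduce_mulVg cats0.
by rewrite -reduce_catr -(reduce_catl (g ++ s ++ winv g)) e reduce_catr reduce_mulVg.
Qed.

Lemma cred_conjugate n s : exists u, s = u ++ cred n s ++ winv u.
Proof.
elim: n s => [|n IH] [|x t] /=; try by exists [::]; rewrite cats0.
case: ifP => [/andP[t_gt0 /eqP lastt]|_]; last by exists [::]; rewrite cats0.
set t' := take (size t).-1 t.
have -> : t = t' ++ [:: linv x].
  case/lastP: t t_gt0 lastt @t' => [|t0 z] // _; rewrite last_rcons => <-.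
  by rewrite size_rcons -cats1 take_size_cat.
have [u {1}->] := IH t'; exists (x :: u).
by rewrite winv_cons /= !catA.
Qed.

Definition la : letter := (gen_a, false).
Definition lA : letter := (gen_a, true).
Definition lb : letter := (gen_b, false).
Definition lB : letter := (gen_b, true).

(* c = b a b^-1 a^-1 modulo r *)
Definition elim_c_letter (x : letter) : word :=
  if x.1 == gen_c then (if x.2 then [:: la; lb; lA; lB] else [:: lb; la; lB; lA])
  else [:: x].
Definition elim_c (w : word) : word := flatten (map elim_c_letter w).

Definition ab_count (w : word) : nat := count (fun x : letter => x.1 != gen_c) w.
Definition c_count (w : word) : nat := count (fun x : letter => x.1 == gen_c) w.

Lemma elim_c_cat u v : elim_c (u ++ v) = elim_c u ++ elim_c v.
Proof. by rewrite /elim_c map_cat flatten_cat. Qed.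

Lemma elim_c_cons x v : elim_c (x :: v) = elim_c_letter x ++ elim_c v.
Proof. by []. Qed.

Lemma elim_c_letter_linv x : elim_c_letter (linv x) = winv (elim_c_letter x).
Proof. by case: x => i [|]; rewrite /elim_c_letter /=; case: (i == gen_c). Qed.

Lemma elim_c_winv g : elim_c (winv g) = winv (elim_c g).
Proof.
elim: g => [|x g IH] //.
by rewrite winv_cons elim_c_cat IH elim_c_cons winv_cat /= cats0 elim_c_letter_linv.
Qed.

Lemma reduce_elim_c_reduce u : reduce (elim_c (reduce u)) = reduce (elim_c u).
Proof.
elim: u => [|x u IH] //=.
rewrite -reduce_catr -IH reduce_catr.
case: (reduce u) => [|y s] //=; case: ifP => [/eqP ->|_] //.
by rewrite elim_c_cons elim_c_letter_linv catA -reduce_catl reduce_mulgV.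
Qed.

Lemma feq_elim_c u v : feq u v -> feq (elim_c u) (elim_c v).
Proof. by rewrite /feq => e; rewrite -reduce_elim_c_reduce e reduce_elim_c_reduce. Qed.

Lemma elim_c_prod_conj gs : reduce (elim_c (prod_conj gs)) = [::].
Proof.
elim: gs => [|[g e] gs IH] //.
rewrite /prod_conj /= -/(prod_conj gs) elim_c_cat -reduce_catr IH cats0.
rewrite /conj_r /= !elim_c_cat elim_c_winv.
rewrite -reduce_catr -(reduce_catl (elim_c (if e then _ else _))).
have -> : reduce (elim_c (if e then winv rel_r else rel_r)) = [::] by case: e.
by rewrite /= reduce_catr reduce_mulgV.
Qed.

Definition conj_by (u : word) (p : word * bool) : word * bool := (u ++ p.1, p.2).

Lemma prod_conj_cons p gs : prod_conj (p :: gs) = conj_r p ++ prod_conj gs.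
Proof. by []. Qed.

Lemma prod_conj_cat gs hs : prod_conj (gs ++ hs) = prod_conj gs ++ prod_conj hs.
Proof. by rewrite /prod_conj map_cat flatten_cat. Qed.

Lemma feq_prod_conj_by u gs :
  feq (prod_conj (map (conj_by u) gs)) (u ++ prod_conj gs ++ winv u).
Proof.
elim: gs => [|p gs IH]; first by rewrite /feq reduce_mulgV.
have -> : prod_conj (map (conj_by u) (p :: gs)) =
          (u ++ conj_r p ++ winv u) ++ prod_conj (map (conj_by u) gs).
  by rewrite /prod_conj /= /conj_r winv_cat !catA.
rewrite /feq -reduce_catr IH reduce_catr prod_conj_cons -!catA.
by do 4 apply: feq_cat2l; apply: reduce_mulKg.
Qed.

Lemma letter_decomp x : exists2 hs, size hs = (x.1 == gen_c) &
  feq [:: x] (prod_conj hs ++ elim_c_letter x).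
Proof.
case: x => i e; case: (eqVneq i gen_c) => [->|ic]; last first.
  by exists [::]; rewrite /elim_c_letter /= ?(negbTE ic).
exists [:: (if e then [::] else [:: lb; la; lB; lA], e)] => //.
by case: e; vm_compute.
Qed.

Lemma feq_prod_conj_elim_c w : exists2 gs, size gs = c_count w &
  feq w (prod_conj gs ++ elim_c w).
Proof.
elim: w => [|x w [gs size_gs IH]]; first by exists [::].
have [hs size_hs ex] := letter_decomp x.
exists (hs ++ map (conj_by (elim_c_letter x)) gs).
  by rewrite size_cat size_map size_hs size_gs.
rewrite -cat1s prod_conj_cat elim_c_cons -!catA.
apply: feq_trans (feq_cat ex IH) _; rewrite -catA; apply: feq_cat2l.
rewrite /feq [RHS]/= -[RHS]reduce_catl (feq_prod_conj_by _ gs) reduce_catl -!catA.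
by do 2 apply: feq_cat2l; apply: feq_sym; apply: reduce_mulKg.
Qed.

Import Order.TTheory GRing.Theory Num.Theory.
Local Open Scope ring_scope.

(* Vertices of the Cayley tree of F_2 are reduced words; the edge (k, i) joins
   k to x_i k. A word is read from right to left, so the path of v starting at q
   visits the vertices foldr push q (drop j v). *)
Definition edge := (word * 'I_3)%type.

Definition step_flow (q : word) (y : letter) (e : edge) : int :=
  if y.2 then - (e == (push y q, y.1))%:Z else (e == (q, y.1))%:Z.

Fixpoint path_flow (q v : word) (e : edge) : int :=
  if v is y :: v' then path_flow q v' e + step_flow (foldr push q v') y e else 0.

Lemma path_flow_cat q u v e :
  path_flow q (u ++ v) e = path_flow (foldr push q v) u e + path_flow q v e.
Proof. by elim: u => [|y u IH] /=; rewrite ?add0r // IH foldr_cat addrAC. Qed.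

Lemma step_flow_linv q y e :
  reduced q -> step_flow q y e + step_flow (push y q) (linv y) e = 0.
Proof.
move=> rq; case: y => i [|]; rewrite /step_flow /linv /=; first by rewrite addNr.
by rewrite (push_linvK (i, false) rq) subrr.
Qed.

Lemma path_flow_reduce q v e : reduced q -> path_flow q (reduce v) e = path_flow q v e.
Proof.
move=> rq; elim: v => [|x v IH] //=; rewrite -IH -(foldr_push_reduce _ rq).
case: (reduce v) (reduce_reduced v) => [|y s] //= rys.
case: ifP => [/eqP ->|_] //=; rewrite -addrA -{3}(linvK x) step_flow_linv ?addr0 //.
by apply: foldr_push_reduced; case: s rys => // z s /andP[].
Qed.

(* The four edges crossed by the image b a b^-1 a^-1 of c, in terms of the
   vertex k it visits after two steps; c^-1 crosses them backwards. *)
Definition comm_flow (k : word) (e : edge) : int :=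
  (e == (k, gen_a))%:Z + (e == (push la k, gen_b))%:Z
  - (e == (push lb k, gen_a))%:Z - (e == (k, gen_b))%:Z.

Definition cell_base (q : word) (eps : bool) : word :=
  if eps then push lA (push lB q) else push lB (push lA q).

Definition cells_flow (l : seq (word * bool)) (e : edge) : int :=
  \sum_(p <- l) (-1) ^+ p.2 * comm_flow p.1 e.

Lemma path_flow_elim_c_letter q x e : reduced q ->
  path_flow q (elim_c_letter x) e =
  if x.1 == gen_c then (-1) ^+ x.2 * comm_flow (cell_base q x.2) e else step_flow q x e.
Proof.
move=> rq; rewrite /elim_c_letter; case: ifP => _; last by rewrite /= add0r.
case: (x.2); rewrite /= /cell_base /comm_flow /step_flow /=.
- rewrite push_linvVK; last exact/push_reduced.
  by rewrite expr1 !mulN1r; lia.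
- rewrite push_linvVK; last exact/push_reduced.
  by rewrite expr0 !mul1r; lia.
Qed.

Fixpoint ab_flow (w : word) (e : edge) : int :=
  if w is x :: w' then
    ab_flow w' e + (if x.1 == gen_c then 0 else step_flow (reduce (elim_c w')) x e)
  else 0.

Fixpoint cells (w : word) : seq (word * bool) :=
  if w is x :: w' then
    if x.1 == gen_c then (cell_base (reduce (elim_c w')) x.2, x.2) :: cells w' else cells w'
  else [::].

Lemma path_flow_elim_c w e :
  path_flow [::] (elim_c w) e = ab_flow w e + cells_flow (cells w) e.
Proof.
elim: w => [|x w IH]; first by rewrite /cells_flow big_nil.
rewrite elim_c_cons path_flow_cat IH path_flow_elim_c_letter ?reduce_reduced //=.
by case: ifP => _; rewrite ?/cells_flow ?big_cons /= -/(reduce _); lia.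
Qed.

Lemma sum_eq_le1 (T : eqType) (E : seq T) (t : T) : uniq E -> \sum_(e <- E) (e == t)%:Z <= 1.
Proof.
have -> : \sum_(e <- E) (e == t)%:Z = (count_mem t E)%:Z.
  by elim: E => [|y E IH]; rewrite ?big_nil ?big_cons //= IH PoszD.
by move=> uE; rewrite count_uniq_mem //; case: (_ \in _).
Qed.

Lemma ab_flow_bound w (E : seq edge) : uniq E ->
  \sum_(e <- E) `|ab_flow w e| <= (ab_count w)%:Z.
Proof.
move=> uE; elim: w => [|x w IH] /=; first by rewrite big1 // => e _; rewrite normr0.
set q := reduce (elim_c w).
have step_bound :
    \sum_(e <- E) `|if x.1 == gen_c then 0 else step_flow q x e| <= (x.1 != gen_c)%:Z.
  case: (x.1 == gen_c); first by rewrite big1 // => e _; rewrite normr0.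
  have -> : \sum_(e <- E) `|step_flow q x e|
      = \sum_(e <- E) (e == (if x.2 then push x q else q, x.1))%:Z.
    by apply: eq_bigr => e _; rewrite /step_flow; case: (x.2); rewrite ?normrN; case: (_ == _).
  exact: sum_eq_le1.
by rewrite PoszD addrC (le_trans (ler_sum _ (fun e _ => ler_normD _ _))) // big_split lerD.
Qed.

(* Each edge of the commutator path at v, paired with the other vertex whose
   commutator path crosses it. *)
Definition comm_edges (v : word) : seq (edge * word) :=
  [:: ((v, gen_a), push lB v); ((push la v, gen_b), push la v);
      ((push lb v, gen_a), push lb v); ((v, gen_b), push lA v)].

Lemma push_neq x s : push x s != s.
Proof.
apply/eqP => /(congr1 size); case: s => [|y s] //=; case: ifP => _ /=; lia.
Qed.

Lemma gen_ab : (gen_a == gen_b) = false. Proof. by []. Qed.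

Lemma uniq_comm_edges v : uniq (map fst (comm_edges v)).
Proof.
have [na nb] := (push_neq la v, push_neq lb v).
by rewrite /= !in_cons !xpair_eqE /= !eqxx !andbT !andbF eq_sym (negbTE nb) (negbTE na).
Qed.

Lemma comm_flow_out v e : e \notin map fst (comm_edges v) -> comm_flow v e = 0.
Proof.
rewrite /comm_flow /= !in_cons in_nil orbF.
by do 4 case: (_ == _).
Qed.

Lemma comm_flow_edge v p : p \in comm_edges v -> `|comm_flow v p.1| = 1.
Proof.
have [na nb] := (push_neq la v, push_neq lb v).
rewrite !in_cons in_nil orbF => /or4P[] /eqP-> {p};
  by rewrite /comm_flow !xpair_eqE /= !eqxx ?(eq_sym v) ?(negbTE na) ?(negbTE nb)
     ?gen_ab ?(eq_sym gen_b) ?gen_ab !andbF.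
Qed.

Lemma push_inj x s t : reduced s -> reduced t -> push x s = push x t -> s = t.
Proof. by move=> rs rt est; rewrite -(push_linvK x rs) est push_linvK. Qed.

Lemma comm_edge_owner v k p : reduced v -> reduced k -> p \in comm_edges v ->
  comm_flow k p.1 != 0 -> k = v \/ k = p.2.
Proof.
move=> rv rk; rewrite !in_cons in_nil orbF => /or4P[] /eqP-> {p};
  rewrite /comm_flow !xpair_eqE /= !eqxx ?gen_ab ?(eq_sym gen_b) ?gen_ab !andbF !andbT /=.
- case: (eqVneq v k) => [->|_]; first by left.
  by case: (eqVneq v (push lb k)) => [->|_]; first by right; rewrite (push_linvK lb rk).
- case: (eqVneq (push la v) (push la k)) => [/(push_inj rv rk)->|_]; first by left.
  by case: (eqVneq (push la v) k) => [->|_]; first by right.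
- case: (eqVneq (push lb v) (push lb k)) => [/(push_inj rv rk)->|_]; first by left.
  by case: (eqVneq (push lb v) k) => [->|_]; first by right.
- case: (eqVneq v k) => [->|_]; first by left.
  by case: (eqVneq v (push la k)) => [->|_]; first by right; rewrite (push_linvK la rk).
Qed.

(* In the tree, at most one neighbour of v is closer to the root. *)
Lemma comm_edges_outward v :
  (3 <= count (fun p : edge * word => size v < size p.2) (comm_edges v))%N.
Proof.
case: v => [|[[[|[|[|i]]] ?] []] v] //=; rewrite /= ?eqxx /=; lia.
Qed.

Lemma big_seq_restrict (T : eqType) (R : nmodType) (E F : seq T) (D : T -> R) :
  uniq E -> uniq F -> {subset F <= E} -> (forall e, e \notin F -> D e = 0) ->
  \sum_(e <- E) D e = \sum_(e <- F) D e.
Proof.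
move=> uE uF FE DF; rewrite (bigID (mem F)) /= [X in _ + X]big1 ?addr0 //.
rewrite -big_filter; apply/perm_big/uniq_perm; rewrite ?filter_uniq // => e.
by rewrite mem_filter andb_idr //; apply: FE.
Qed.

Lemma sum_ge_count (T : eqType) (s : seq T) (f : T -> int) (P : pred T) :
  {in s, forall x, -1 <= f x} -> {in s, forall x, P x -> f x = 1} ->
  (2 * count P s)%:Z - (size s)%:Z <= \sum_(x <- s) f x.
Proof.
elim: s => [|y s IH] f_ge f_P; first by rewrite big_nil.
rewrite big_cons /=.
have sub : {subset s <= y :: s} := @mem_behead _ (y :: s).
have := IH (sub_in1 sub f_ge) (sub_in1 sub f_P).
have := f_ge y (mem_head y s); case Py: (P y); last by move=> /=; lia.
by rewrite (f_P y (mem_head y s) Py) /=; lia.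
Qed.

Definition coherent (l : seq (word * bool)) : Prop :=
  forall k eps, (k, eps) \in l -> (k, ~~ eps) \notin l.

Lemma cells_flow_cons p l e :
  cells_flow (p :: l) e = (-1) ^+ p.2 * comm_flow p.1 e + cells_flow l e.
Proof. by rewrite /cells_flow big_cons. Qed.

Lemma cells_flow_single l p0 e :
  (forall p, p \in l -> comm_flow p.1 e != 0 -> p = p0) ->
  cells_flow l e = (count_mem p0 l)%:Z * ((-1) ^+ p0.2 * comm_flow p0.1 e).
Proof.
elim: l => [|p l IH] only_p0; first by rewrite /cells_flow big_nil mul0r.
have sub : {subset l <= p :: l} := @mem_behead _ (p :: l).
rewrite cells_flow_cons IH => [|q /sub]; last exact: only_p0.
case: (eqVneq p p0) => [->|pp0] /=; first by rewrite eqxx PoszD mulrDl mul1r.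
have /eqP-> : comm_flow p.1 e == 0.
  by apply: contraNT pp0 => /(only_p0 p (mem_head p l))->.
by rewrite (negbTE pp0) mulr0 add0r.
Qed.

Lemma cells_flow_cons_ge p l e : `|comm_flow p.1 e| = 1 ->
  -1 <= `|cells_flow (p :: l) e| - `|cells_flow l e|.
Proof.
move=> cf1; rewrite lerBrDr addrC cells_flow_cons [_ + cells_flow _ _]addrC.
have := lerB_normD (cells_flow l e) ((-1) ^+ p.2 * comm_flow p.1 e).
by rewrite normrM normr_sign cf1 mul1r.
Qed.

Lemma cells_flow_cons_outward v eps l pe :
  reduced v -> (forall q, q \in l -> reduced q.1 /\ (size q.1 <= size v)%N) ->
  coherent ((v, eps) :: l) -> pe \in comm_edges v -> (size v < size pe.2)%N ->
  `|cells_flow ((v, eps) :: l) pe.1| - `|cells_flow l pe.1| = 1.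
Proof.
move=> rv l_le coh pe_v v_pe.
have only_v : forall q, q \in l -> comm_flow q.1 pe.1 != 0 -> q = (v, eps).
  move=> [k b] ql nz; have [rk k_le] := l_le _ ql.
  have [/= kv|/= kpe] := comm_edge_owner rv rk pe_v nz; last by rewrite -kpe ltnNge k_le in v_pe.
  subst k; case: (eqVneq b eps) => [->|bN] //.
  have bNeps : b = ~~ eps by move: bN; case: (b); case: (eps).
  by have := coh v eps (mem_head _ _); rewrite in_cons -bNeps ql orbT.
rewrite cells_flow_cons (cells_flow_single only_v) /= -{1}[_ * comm_flow _ _]mul1r -mulrDl.
by rewrite !normrM normr_sign (comm_flow_edge pe_v) !mulr1 !ger0_norm // addrK.
Qed.

(* Peel off a cell whose base vertex is farthest from the root: no other cell
   crosses at least three of its four edges, so removing it lowers the total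
   variation by at least 3 - 1. *)
Lemma cells_flow_variation l (E : seq edge) :
  sorted (fun p q : word * bool => size q.1 <= size p.1)%N l -> uniq E ->
  (forall p, p \in l -> reduced p.1 /\ {subset map fst (comm_edges p.1) <= E}) ->
  coherent l -> (2 * size l)%:Z <= \sum_(e <- E) `|cells_flow l e|.
Proof.
elim: l => [|[v eps] l IH] sorted_l uE l_ok coh /=.
  by rewrite sumr_ge0 // => e _; rewrite normr_ge0.
have sub : {subset l <= (v, eps) :: l} := @mem_behead _ (_ :: l).
have [rv vE] := l_ok _ (mem_head _ _).
have IHl := IH (path_sorted sorted_l) uE (fun q ql => l_ok q (sub q ql))
  (fun k b kl => contra (sub _) (coh k b (sub _ kl))).
have l_le : forall q, q \in l -> reduced q.1 /\ (size q.1 <= size v)%N.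
  move=> q ql; split; first by case: (l_ok q (sub q ql)).
  by move: q ql; apply/allP/(order_path_min _ sorted_l) => p q r /= qp rq; apply: leq_trans qp.
rewrite -[\sum_(e <- E) _](subrK (\sum_(e <- E) `|cells_flow l e|)) -sumrB.
rewrite (big_seq_restrict uE (uniq_comm_edges v) vE) => [|e ev]; last first.
  by rewrite cells_flow_cons comm_flow_out // mulr0 add0r subrr.
rewrite big_map.
have gain := @sum_ge_count _ (comm_edges v)
  (fun p => `|cells_flow ((v, eps) :: l) p.1| - `|cells_flow l p.1|)
  (fun p => size v < size p.2)%N
  (fun p pe => @cells_flow_cons_ge (v, eps) l p.1 (comm_flow_edge pe))
  (fun p pe => @cells_flow_cons_outward v eps l p rv l_le coh pe).
rewrite addrC; apply: le_trans (lerD IHl gain).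
have := comm_edges_outward v; move: (count _ _) => n.
by rewrite /comm_edges /=; lia.
Qed.

Lemma size_cells w : size (cells w) = c_count w.
Proof. by elim: w => [|x w IH] //=; rewrite /c_count /=; case: ifP => _ /=; rewrite IH. Qed.

Lemma cells_reduced w p : p \in cells w -> reduced p.1.
Proof.
elim: w => [|x w IH] //=; case: ifP => _ // /[!in_cons] /orP[/eqP-> /=|]; last exact: IH.
by rewrite /cell_base; case: (x.2); do 2 apply: push_reduced; apply: reduce_reduced.
Qed.

Lemma cells_flow_trivial w e : reduce (elim_c w) = [::] -> cells_flow (cells w) e = - ab_flow w e.
Proof.
move=> trivial; apply/eqP; rewrite -addr_eq0 addrC -path_flow_elim_c.
by rewrite -path_flow_reduce // trivial.
Qed.

Lemma coherent_ab_count w :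
  reduce (elim_c w) = [::] -> coherent (cells w) -> (2 * c_count w <= ab_count w)%N.
Proof.
move=> trivial coh.
pose l := sort (fun p q : word * bool => size q.1 <= size p.1)%N (cells w).
pose E := undup (flatten [seq map fst (comm_edges p.1) | p <- cells w]).
have perm_l : perm_eq l (cells w) by apply/permPl/perm_sort.
have flow_l e : cells_flow l e = - ab_flow w e.
  by rewrite -cells_flow_trivial // /cells_flow (perm_big _ perm_l).
have : (2 * size l)%:Z <= \sum_(e <- E) `|cells_flow l e|.
  apply: cells_flow_variation (undup_uniq _) _ _.
  - by apply: sort_sorted => p q; apply: leq_total.
  - move=> p; rewrite mem_sort => pw; split; first exact: cells_reduced pw.
    move=> e ep; rewrite mem_undup; apply/flattenP.
    by exists (map fst (comm_edges p.1)) => //; apply: map_f.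
  - by move=> k b; rewrite !mem_sort; apply: coh.
under eq_bigr do rewrite flow_l normrN.
move/le_trans/(_ (ab_flow_bound w (undup_uniq _))).
by rewrite (perm_size perm_l) size_cells.
Qed.

Lemma mem_cells k eps w : (k, eps) \in cells w ->
  exists u be, w = u ++ (gen_c, eps) :: be /\ k = cell_base (reduce (elim_c be)) eps.
Proof.
elim: w => [|x w IH] //=.
have ext : (k, eps) \in cells w -> exists u be,
    x :: w = u ++ (gen_c, eps) :: be /\ k = cell_base (reduce (elim_c be)) eps.
  by move/IH => [u [be [-> ->]]]; exists (x :: u), be.
case: ifP => [/eqP xc|_]; last exact: ext.
rewrite in_cons => /orP[/eqP[-> ->]|]; last exact: ext.
by clear ext; exists [::], w; case: x xc => i e /= ->.
Qed.

Lemma cell_base_conflict u be eps :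
  cell_base (reduce (elim_c (u ++ (gen_c, eps) :: be))) (~~ eps) =
    cell_base (reduce (elim_c be)) eps ->
  reduce (elim_c u) = [::].
Proof.
rewrite elim_c_cat reduce_cat => eq_base.
apply: (@feq_cancelr _ (reduce (elim_c ((gen_c, eps) :: be)))).
rewrite /feq reduce_cat !reduceK.
have := foldr_push_reduced (elim_c u) (reduce_reduced (elim_c ((gen_c, eps) :: be))).
move: eq_base; rewrite elim_c_cons reduce_cat.
move: (reduce (elim_c be)) => Y.
case: eps; rewrite /cell_base /=; move: (foldr push _ (elim_c u)) => X <- rX.
- by rewrite (push_linvVK lb) ?(push_linvVK la) //; apply: push_reduced.
- by rewrite (push_linvVK la) ?(push_linvVK lb) //; apply: push_reduced.
Qed.

Definition cancelling_c_pair (w : word) : Prop :=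
  exists al u be e, w = al ++ (gen_c, e) :: u ++ (gen_c, ~~ e) :: be /\
                    reduce (elim_c u) = [::].

Lemma cancelling_c_pair_cons x w : cancelling_c_pair w -> cancelling_c_pair (x :: w).
Proof. by move=> [al [u [be [e [-> u1]]]]]; exists (x :: al), u, be, e. Qed.

Lemma cells_conflict w k eps :
  (k, eps) \in cells w -> (k, ~~ eps) \in cells w -> cancelling_c_pair w.
Proof.
elim: w eps => [|x w IH] eps //=.
case: ifP => [/eqP xc|_ k1 k2]; last exact/cancelling_c_pair_cons/(IH eps).
have head_conflict e : k = cell_base (reduce (elim_c w)) e -> (k, ~~ e) \in cells w ->
    x = (gen_c, e) -> cancelling_c_pair (x :: w).
  move=> k_w /mem_cells[u [be [w_eq k_be]]] ->; exists [::], u, be, e; split; first by rewrite w_eq.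
  by apply: (@cell_base_conflict _ be (~~ e)); rewrite -w_eq negbK -k_w.
have x_eq : x = (gen_c, x.2) by rewrite -xc; case: (x).
rewrite !in_cons => /orP[/eqP[k_eq eps_eq]|k1] /orP[/eqP[k_eq' eps_eq']|k2].
- by move: eps_eq'; rewrite -eps_eq; case: (eps).
- by apply: (head_conflict eps) => //; rewrite eps_eq.
- by apply: (head_conflict (~~ eps)) => //; rewrite ?negbK ?eps_eq'.
- exact/cancelling_c_pair_cons/(IH eps).
Qed.

Lemma ab_count_cat u v : ab_count (u ++ v) = (ab_count u + ab_count v)%N.
Proof. by rewrite /ab_count count_cat. Qed.

Lemma reduce_elim_c_cancel al t u be : reduce (elim_c u) = [::] ->
  reduce (elim_c (al ++ t ++ u ++ winv t ++ be)) = reduce (elim_c (al ++ be)).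
Proof.
move=> u1; rewrite !elim_c_cat elim_c_winv -reduce_catr -[RHS]reduce_catr; congr reduce.
by rewrite -reduce_catr -(reduce_catl (elim_c u)) u1 reduce_catr reduce_mulKVg.
Qed.

Lemma feq_insert_conj al t u be gu gab :
  feq u (prod_conj gu) -> feq (al ++ be) (prod_conj gab) ->
  feq (al ++ t ++ u ++ winv t ++ be) (prod_conj (map (conj_by (al ++ t)) gu ++ gab)).
Proof.
move=> eu eab; rewrite prod_conj_cat.
apply: feq_trans (feq_cat (feq_sym (feq_prod_conj_by _ _)) eab).
rewrite winv_cat -!catA; do 2 apply: feq_cat2l; apply: feq_cat eu _.
by apply: feq_cat2l; apply: feq_sym; apply: reduce_mulKg.
Qed.

Lemma double_area_le_ab_count w : reduce (elim_c w) = [::] ->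
  exists gs, feq w (prod_conj gs) /\ (2 * size gs <= ab_count w)%N.
Proof.
elim: {w}(size w) {-2}w (leqnn (size w)) => [|n IH] w w_n w1.
  by case: w w_n w1 => // _ _; exists [::].
case: (boolP (has (fun p => (p.1, ~~ p.2) \in cells w) (cells w))) => [|/hasPn coh].
  case/hasP=> -[k eps] k1 k2; have [al [u [be [e [w_eq u1]]]]] := cells_conflict k1 k2.
  have [gu [eu gu_le]] : exists gs, feq u (prod_conj gs) /\ (2 * size gs <= ab_count u)%N.
    by apply: IH u1; move: w_n; rewrite w_eq !size_cat /= size_cat; lia.
  have [gab [eab gab_le]] :
      exists gs, feq (al ++ be) (prod_conj gs) /\ (2 * size gs <= ab_count (al ++ be))%N.
    apply: IH; first by move: w_n; rewrite w_eq !size_cat /= size_cat /=; lia.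
    by rewrite -(reduce_elim_c_cancel al [:: (gen_c, e)] be u1) -w_eq.
  exists (map (conj_by (al ++ [:: (gen_c, e)])) gu ++ gab); split.
    by rewrite w_eq; apply: (feq_insert_conj [:: (gen_c, e)] eu eab).
  move: gu_le gab_le; rewrite w_eq size_cat size_map !ab_count_cat /=.
  by rewrite ab_count_cat /ab_count /=; lia.
have [gs size_gs e] := feq_prod_conj_elim_c w.
exists gs; split; first by move: e; rewrite /feq -reduce_catr w1 cats0.
by rewrite size_gs; apply: coherent_ab_count => // k b /coh.
Qed.

Local Close Scope ring_scope.

Theorem theorem1p2 (w : word) :
  in_N w -> exists gs : seq (word * bool),
    feq w (prod_conj gs) /\ 2 * size gs <= ab_length w.
Proof.
move=> [gs0 w_gs0].
have [u w_u] := cred_conjugate (size (reduce w)) (reduce w).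
have {}w_u : feq w (u ++ cyclic_reduction w ++ winv u) by rewrite /feq -w_u reduceK.
have cr1 : reduce (elim_c (cyclic_reduction w)) = [::].
  apply: (@feq_conj_trivial (elim_c u)); rewrite -elim_c_winv -!elim_c_cat.
  by rewrite /feq -(feq_elim_c w_u) (feq_elim_c w_gs0) elim_c_prod_conj.
have [gs [cr_gs gs_le]] := double_area_le_ab_count cr1.
exists (map (conj_by u) gs); split; last by rewrite size_map.
apply: feq_trans w_u (feq_sym (feq_trans (feq_prod_conj_by u gs) _)).
by apply: feq_cat2l; apply: feq_cat (feq_sym cr_gs) _.
Qed.
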